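(* Let $G$ be a finite simple $2$-connected graph with at least $4$ vertices and $\delta_2(G)\geqslant 4$. Then $G$ contains a chorded cycle.
   Context: $\delta_2(G)$ is the minimum of $|N_G(u)\cup N_G(v)|$ over all pairs of distinct nonadjacent vertices $u,v$ of $G$ (i.e. over independent sets of size 2). A chorded cycle is a cycle together with an edge of the graph, not on the cycle, joining two vertices of the cycle. *)

From mathcomp Require Import all_boot.
Set Implicit Arguments. Unset Strict Implicit. Unset Printing Implicit Defensive.

Section Graphs.
Variable T : finType.

Definition simple_graph (e : rel T) : Prop := symmetric e /\ irreflexive e.

Definition nbhd (e : rel T) (v : T) : {set T} := [set w | e v w].

Definition induced_rel (e : rel T) (S : {set T}) : rel T :=
  fun x y => [&& x \in S, y \in S & e x y].

Definition connected_on (e : rel T) (S : {set T}) : Prop :=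
  forall x y, x \in S -> y \in S -> connect (induced_rel e S) x y.

Definition two_connected (e : rel T) : Prop :=
  [/\ 3 <= #|T|, connected_on e setT & forall v : T, connected_on e [set~ v]].

Definition delta2_ge (e : rel T) (k : nat) : Prop :=
  forall u v : T, u != v -> ~~ e u v -> k <= #|nbhd e u :|: nbhd e v|.

Definition is_cycle (e : rel T) (c : seq T) : Prop :=
  [/\ 3 <= size c, uniq c & cycle e c].

Definition has_chorded_cycle (e : rel T) : Prop :=
  exists c : seq T, is_cycle e c /\
    exists x y : T, [/\ x \in c, y \in c, e x y, y != next c x & x != next c y].

End Graphs.

From mathcomp Require Import all_boot.
Set Implicit Arguments. Unset Strict Implicit. Unset Printing Implicit Defensive.

(* Take a longest path starting at x; by maximality every neighbour of x lies on
   it.  If x had three neighbours, two of them, a before b, would differ from the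
   successor of x, and the segment from x to b would close into a cycle with chord
   xa.  So x has degree 2 (2-connectivity gives at least 2): its neighbours are
   its successor and a later vertex y.  Reversing the segment before y (Posa
   rotation) gives another longest path, starting at the predecessor w of y, so
   w has degree 2 too and N(x) :|: N(w) consists of at most three vertices: the
   successor of x, the predecessor of w, and y.  If x and w are nonadjacent this
   contradicts delta_2 >= 4; if they are adjacent, y separates {x, w} from the
   remaining vertices (there are some since |G| >= 4), contradicting
   2-connectivity. *)

Section LongestPaths.
Variables (T : finType) (e : rel T).

Definition is_longest_path (s : seq T) : Prop :=
  [/\ uniq s, sorted e s & forall s', uniq s' -> sorted e s' -> size s' <= size s].

Lemma exists_longest_path (v : T) : exists x t, is_longest_path (x :: t).
Proof.
pose has_path n := [exists p : n.-tuple T, uniq p && sorted e p].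
have has_path1 : has_path 1 by apply/existsP; exists [tuple v].
have path_bounded n : has_path n -> n <= #|T|.
  case/existsP=> p /andP [uniq_p _]; rewrite -(size_tuple p) -(card_uniqP uniq_p).
  exact: max_card.
have [n /existsP [p /andP [uniq_p sorted_p]] longest] :=
  ex_maxnP (ex_intro has_path 1 has_path1) path_bounded.
have : 0 < size p by rewrite size_tuple (longest _ has_path1).
case def_p: (tval p) => [//|x t] _; exists x, t; rewrite -def_p.
split=> // s uniq_s sorted_s.
by rewrite size_tuple; apply: longest; apply/existsP; exists (in_tuple s); apply/andP.
Qed.

Lemma chorded_cycle_of_path x c u b q a :
  uniq (x :: c :: u ++ b :: q) -> path e x (c :: u ++ b :: q) ->
  e b x -> a \in u -> e x a -> has_chorded_cycle e.
Proof.
move=> uniq_s path_s bx au xa.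
have uniq_C : uniq (x :: c :: rcons u b).
  by move: uniq_s; rewrite -cat_rcons -!cat_cons cat_uniq => /andP [].
have b_notin_u : b \notin u.
  move: uniq_s; rewrite -!cat_cons cat_uniq => /and3P [_ /norP [+ _] _].
  by apply: contra => bu; rewrite !inE bu !orbT.
exists (x :: c :: rcons u b); split.
  split=> //; first by rewrite /= size_rcons.
  move: path_s; rewrite -cat_rcons -cat_cons cat_path => /andP [path_C _].
  by rewrite /cycle rcons_path path_C /= last_rcons.
exists x, a; split.
- exact: mem_head.
- by rewrite !inE mem_rcons inE au !orbT.
- exact: xa.
- rewrite /next /= eqxx; apply: contraTneq au => ->.
  by move: uniq_C => /and3P [_ + _]; rewrite mem_rcons inE negb_or => /andP [].
- apply: contraNneq b_notin_u => next_a; have := prev_next uniq_C a.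
  have x_notin : x \notin c :: rcons u b by case/andP: uniq_C.
  rewrite -next_a prev_nth mem_head (memNindex x_notin).
  by rewrite -[size _]/((size (x :: c :: rcons u b)).-1) nth_last /= last_rcons => ->.
Qed.

Hypotheses (e_sym : symmetric e) (e_irr : irreflexive e).

Lemma longest_path_nbhd_sub x t w : is_longest_path (x :: t) -> e x w -> w \in t.
Proof.
case=> uniq_xt path_xt longest xw; apply/negPn/negP => w_notin_t.
have w_neq_x : w != x by apply: contraTneq xw => ->; rewrite e_irr.
suff : size (w :: x :: t) <= size (x :: t) by rewrite ltnn.
apply: longest; first by rewrite /= inE negb_or w_neq_x w_notin_t.
by rewrite /= e_sym xw.
Qed.

Lemma longest_path_chorded x t :
  is_longest_path (x :: t) -> 3 <= #|nbhd e x| -> has_chorded_cycle e.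
Proof.
move=> longest_xt deg_x; have [uniq_xt path_xt _] := longest_xt.
have nbhd_in_t w : w \in nbhd e x -> w \in t.
  by rewrite inE; apply: longest_path_nbhd_sub.
have : 1 < #|nbhd e x :\ head x t|.
  by move: deg_x; rewrite (cardsD1 (head x t)); case: (_ \in _) => // /ltnW.
case/card_gt1P=> a [b [/setD1P [a_h Na] /setD1P [b_h Nb] a_neq_b]].
wlog lt_ab : a b a_h b_h Na Nb a_neq_b / index a t < index b t.
  move=> wlog_ab; case: (ltngtP (index a t) (index b t)) => [lt_ab|lt_ba|eq_ab].
  - exact: (wlog_ab a b).
  - by apply: (wlog_ab b a); rewrite // eq_sym.
  - move: a_neq_b; rewrite -(nth_index x (nbhd_in_t a Na)) eq_ab.
    by rewrite nth_index ?eqxx ?nbhd_in_t.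
have xa : e x a by rewrite inE in Na.
have xb : e x b by rewrite inE in Nb.
move: uniq_xt path_xt a_h lt_ab; case/splitPr: (nbhd_in_t b Nb) => p q.
move=> uniq_s path_s a_h lt_ab.
have b_notin_p : b \notin p.
  by move: uniq_s; rewrite /= cat_uniq => /andP [_ /and3P [_ /norP [+ _] _]].
have a_in_p : a \in p.
  move: lt_ab; rewrite !index_cat (negbTE b_notin_p) /= eqxx addn0.
  by case: ifP => // _; rewrite ltnNge leq_addr.
case: p a_in_p uniq_s path_s a_h {b_notin_p lt_ab} => [//|c u] a_in_p uniq_s path_s a_h.
apply: (chorded_cycle_of_path uniq_s path_s _ _ xa); first by rewrite e_sym.
by move: a_in_p; rewrite inE (negbTE a_h).
Qed.

Lemma longest_path_rotate x L y R :
  is_longest_path (x :: L ++ y :: R) -> e x y ->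
  is_longest_path (rev (x :: L) ++ y :: R).
Proof.
case=> uniq_s path_s longest xy.
have perm_s : perm_eq (x :: L ++ y :: R) (rev (x :: L) ++ y :: R).
  by rewrite -cat_cons perm_cat2r perm_sym perm_rev.
split; first by rewrite -(perm_uniq perm_s).
  move: path_s; rewrite /= cat_path => /andP [path_L /= /andP [_ path_R]].
  rewrite rev_cons -cats1 -catA sorted_cat_cons -rev_cons /= xy path_R !andbT.
  by rewrite rev_sorted /=; apply: sub_path path_L => a b; rewrite e_sym.
by move=> s' uniq_s' sorted_s'; rewrite -(perm_size perm_s); apply: longest.
Qed.

Lemma longest_path_end_split x t :
  is_longest_path (x :: t) -> 2 <= #|nbhd e x| ->
  exists L w y R, t = L ++ w :: y :: R /\ e x y.
Proof.
move=> longest_xt deg_x.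
have : 0 < #|nbhd e x :\ head x t|.
  by move: deg_x; rewrite (cardsD1 (head x t)); case: (_ \in _) => // /ltnW.
case/card_gt0P=> y /setD1P [y_h]; rewrite inE => xy.
case/splitPr: (longest_path_nbhd_sub longest_xt xy) y_h => p R.
case/lastP: p => [|L w] y_h; first by rewrite /= eqxx in y_h.
by exists L, w, y, R; rewrite cat_rcons.
Qed.

Lemma nbhd_sub_pair x a b :
  a != b -> e x a -> e x b -> #|nbhd e x| <= 2 -> nbhd e x \subset [set a; b].
Proof.
move=> a_neq_b xa xb deg_x; suff /eqP <- : [set a; b] == nbhd e x by [].
rewrite eqEcard cards2 a_neq_b deg_x andbT.
by apply/subsetP => z; rewrite !inE => /orP [] /eqP ->.
Qed.

Lemma path_ends_nbhdU_sub x L w y R :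
  uniq (x :: L ++ w :: y :: R) -> path e x (L ++ w :: y :: R) -> e x y ->
  #|nbhd e x| <= 2 -> #|nbhd e w| <= 2 ->
  nbhd e x :|: nbhd e w \subset [:: head w L; last x L; y].
Proof.
move=> uniq_s path_s xy deg_x deg_w.
have [y_notin_xL w_notin_yR] : y \notin x :: L /\ w \notin y :: R.
  move: uniq_s; rewrite -cat_cons cat_uniq.
  by case/and3P=> _ /norP [_ /norP [-> _]] /andP [-> _].
have w_neq_y : w != y by apply: contraNneq w_notin_yR => ->; apply: mem_head.
have x_succ : e x (head w L) by case: L path_s {uniq_s y_notin_xL} => [|v L] /= /andP [].
have [w_pred wy] : e (last x L) w /\ e w y.
  by move: path_s; rewrite cat_path => /and3P [_ /= -> /andP [->]].
have Nx : nbhd e x \subset [set head w L; y].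
  apply: nbhd_sub_pair => //.
  case: L y_notin_xL {x_succ path_s uniq_s w_pred} => [//|v L].
  by apply: contraNneq => <-; rewrite !inE eqxx orbT.
have Nw : nbhd e w \subset [set last x L; y].
  apply: nbhd_sub_pair; rewrite // 1?e_sym //.
  by apply: contraNneq y_notin_xL => <-; apply: mem_last.
apply/subsetP => z; rewrite in_setU => /orP [/(subsetP Nx) | /(subsetP Nw)];
  by rewrite !inE => /orP [] ->; rewrite ?orbT.
Qed.
End LongestPaths.

Section TwoConnected.
Variables (T : finType) (e : rel T).

Lemma exists_notin (A : {set T}) : #|A| < #|T| -> exists z, z \notin A.
Proof.
move=> A_small; have /card_gt0P [z] : 0 < #|~: A|.
  by rewrite -(ltn_add2l #|A|) cardsC addn0.
by rewrite inE; exists z.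
Qed.

Lemma connect_forward_closed (r : rel T) (A : pred T) x z :
  (forall a b, a \in A -> r a b -> b \in A) -> x \in A -> connect r x z -> z \in A.
Proof.
move=> A_closed xA /connectP [p path_p ->] {z}.
elim: p x xA path_p => //= y p IHp x xA /andP [rxy path_p].
exact: IHp (A_closed _ _ xA rxy) path_p.
Qed.

Lemma two_connected_closed_nbhd (A B : {set T}) x :
  two_connected e -> x \in A -> A \subset B -> {in A, forall a, nbhd e a \subset B} ->
  #|A|.+1 < #|T| -> #|A|.+2 <= #|B|.
Proof.
move=> [_ _ no_cut] xA AB nbhd_B A_small; rewrite leqNgt; apply/negP => B_small.
(* Otherwise a vertex y outside A, chosen to cover B :\: A, separates x from any
   vertex z outside y |: A. *)
have BA_le1 : #|B :\: A| <= 1 by rewrite cardsD (setIidPr AB) leq_subLR addn1.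
have [y yA B_sub] : exists2 y, y \notin A & B \subset y |: A.
  have [BA0 | [y /setDP [yB yA]]] := set_0Vmem (B :\: A).
    have [y yA] := exists_notin (ltnW A_small); exists y => //.
    by apply: subset_trans (subsetUr _ _); rewrite -setD_eq0 BA0.
  exists y => //; apply/subsetP => b bB; rewrite in_setU1.
  case: (boolP (b \in A)) => [_|bA]; first by rewrite orbT.
  by rewrite orbF; apply/eqP/(card_le1_eqP BA_le1); apply/setDP.
have [z z_notin] : exists z, z \notin y |: A.
  by apply: exists_notin; rewrite cardsU1 yA.
have xy : x \in [set~ y] by rewrite !inE; apply: contraNneq yA => <-.
have zy : z \in [set~ y] by move: z_notin; rewrite !inE negb_or => /andP [].
have : z \in A.
  apply: connect_forward_closed xA (no_cut y x z xy zy) => a b aA /and3P [_ b_ny ab].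
  have /(subsetP B_sub) : b \in B by apply: (subsetP (nbhd_B a aA)); rewrite inE.
  by move: b_ny; rewrite !inE => /negbTE ->.
by move: z_notin; rewrite in_setU1 negb_or => /andP [_ /negbTE ->].
Qed.

Lemma two_connected_deg_ge2 v : two_connected e -> 2 <= #|nbhd e v|.
Proof.
move=> e_2conn; have [T_ge3 _ _] := e_2conn.
have : 3 <= #|v |: nbhd e v|.
  have := @two_connected_closed_nbhd [set v] (v |: nbhd e v) v e_2conn (set11 v).
  rewrite cards1 sub1set setU11; apply=> // a.
  by rewrite inE => /eqP ->; apply: subsetUr.
by rewrite cardsU1; case: (_ \notin _) => // /ltnW.
Qed.

Lemma nbhdU_card_ge4 x w :
  symmetric e -> two_connected e -> 4 <= #|T| -> delta2_ge e 4 -> x != w ->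
  4 <= #|nbhd e x :|: nbhd e w|.
Proof.
move=> e_sym e_2conn T_ge4 e_delta2 x_neq_w.
have [xw|] := boolP (e x w); last exact: e_delta2.
have := two_connected_closed_nbhd (A := [set x; w]) e_2conn (set21 x w).
rewrite cards2 x_neq_w; apply=> //.
- by apply/subsetP => a; rewrite !inE => /orP [] /eqP ->; rewrite ?(e_sym w) xw ?orbT.
- by move=> a; rewrite !inE => /orP [] /eqP ->; [apply: subsetUl | apply: subsetUr].
Qed.
End TwoConnected.

Theorem corollary2p8 (T : finType) (e : rel T) :
  simple_graph e -> two_connected e -> 4 <= #|T| -> delta2_ge e 4 ->
  has_chorded_cycle e.
Proof.
move=> [e_sym e_irr] e_2conn T_ge4 e_delta2.
have [v _] : exists v : T, v \in T by apply/card_gt0P; apply: leq_trans T_ge4.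
have [x [t longest_xt]] := exists_longest_path e v.
have [deg_x|] := leqP #|nbhd e x| 2; last exact: longest_path_chorded longest_xt.
have [L [w [y [R [def_t xy]]]]] :=
  longest_path_end_split e_sym e_irr longest_xt (two_connected_deg_ge2 x e_2conn).
rewrite {t}def_t in longest_xt.
have longest_w : is_longest_path e (w :: rev (x :: L) ++ y :: R).
  rewrite -cat_cons -rev_rcons rcons_cons; apply: longest_path_rotate xy => //.
  by rewrite cat_rcons.
have [deg_w|] := leqP #|nbhd e w| 2; last exact: longest_path_chorded longest_w.
have [uniq_s path_s _] := longest_xt.
have x_neq_w : x != w.
  by move: uniq_s => /andP [+ _]; apply: contraNneq => ->; rewrite mem_cat inE eqxx orbT.
have nbhdU_le3 : #|nbhd e x :|: nbhd e w| <= 3.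
  apply: leq_trans (card_size [:: head w L; last x L; y]).
  exact/subset_leq_card/(path_ends_nbhdU_sub e_sym uniq_s path_s xy deg_x deg_w).
have := nbhdU_card_ge4 e_sym e_2conn T_ge4 e_delta2 x_neq_w.
by rewrite leqNgt ltnS nbhdU_le3.
Qed.
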